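(* Let $d\ge 3$ and let $S\subseteq\{0,1\}^d$ be the vertex set of a subcube of $Q_d$ of dimension $d'<d$ (i.e., all strings agreeing with a fixed string on a fixed set of $d-d'$ positions). Then the subgraph of $\mathit{CCC}_d$ induced by $\{[\ell,x] : \ell\in\{0,\dots,d-1\},\ x\in S\}$ is a convex subgraph of $\mathit{CCC}_d$.
   Context: Binary strings $x=x_0x_1\cdots x_{d-1}$ have positions $0,\dots,d-1$ from left to right; $x(i)$ denotes $x$ with the bit at position $i$ complemented. The cube-connected cycle $\mathit{CCC}_d$ ($d\ge 3$) has vertex set $\{[\ell,x]:\ell\in\{0,\dots,d-1\},\ x\in\{0,1\}^d\}$; $[\ell,x]$ and $[\ell',x']$ are adjacent iff either $x=x'$ and $\ell'\equiv \ell\pm 1\pmod d$, or $\ell=\ell'$ and $x'=x(\ell)$. $Q_d$ is the hypercube on $\{0,1\}^d$ (adjacency: differing in exactly one bit). A subgraph $H$ of $G$ is convex if every shortest path in $G$ between two vertices of $H$ lies in $H$. *)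

From mathcomp Require Import all_boot.
Set Implicit Arguments. Unset Strict Implicit. Unset Printing Implicit Defensive.

Definition bstr (d : nat) := {ffun 'I_d -> bool}.

Definition flip d (x : bstr d) (i : 'I_d) : bstr d :=
  [ffun j => if j == i then ~~ x j else x j].

Definition ccc_vertex (d : nat) := ('I_d * bstr d)%type.

Definition ccc_adj d : rel (ccc_vertex d) := fun u v =>
  let: (l, x) := u in let: (l', x') := v in
  ((x == x') && ((val l' == (val l).+1 %% d) || (val l == (val l').+1 %% d)))
  || ((l == l') && (x' == flip x l)).

(* Walks in a graph given by a relation e: a walk from u to v is a sequence p
   with path e u p and last u p = v (vertices u :: p); its length is size p. *)
Definition shortest_path (T : eqType) (e : rel T) (u v : T) (p : seq T) :=
  [/\ path e u p, last u p = v &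
      forall q, path e u q -> last u q = v -> size p <= size q].

(* A vertex set V induces a convex subgraph: every shortest path between
   two vertices of V has all its vertices in V (its edges then lie in the
   induced subgraph automatically). *)
Definition convex_set (T : finType) (e : rel T) (V : {set T}) :=
  forall u v p, u \in V -> v \in V -> shortest_path e u v p ->
    all (fun w => w \in V) p.

Definition subcube d (I : {set 'I_d}) (a : bstr d) : {set bstr d} :=
  [set x : bstr d | [forall i in I, x i == a i]].

Definition ccc_over d (S : {set bstr d}) : {set ccc_vertex d} :=
  [set v : ccc_vertex d | v.2 \in S].

From mathcomp Require Import all_boot.
Set Implicit Arguments. Unset Strict Implicit.

(* Let V be the vertices of CCC_d lying over the subcube
   {x | x_i = a_i for i in I}, and let r be the map overwriting the bits of
   positions in I by those of a, [l, x] |-> [l, x'].  Then r fixes V, and it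
   sends every edge of CCC_d either to an edge or to a single vertex: cycle
   edges and cube edges at positions outside I are preserved, cube edges at
   positions in I collapse.  Moreover every edge leaving V is a cube edge at a
   position in I, hence collapses.
   The first part of the file proves, for an arbitrary graph, that such a
   "collapsing retraction" onto V makes V convex: the image of a walk between
   two vertices of V is a walk between the same vertices, never longer, and
   strictly shorter when the walk leaves V, so shortest walks stay in V. *)

Section CollapsingRetraction.
Variables (T : finType) (e : rel T) (V : {set T}) (f : T -> T).

Hypothesis f_edge : forall u w, e u w -> e (f u) (f w) \/ f u = f w.

Definition collapses (u : T) (p : seq T) : bool :=
  has (fun uw => f uw.1 == f uw.2) (zip (u :: p) p).

Lemma image_walk u p : path e u p ->
  exists2 q, path e (f u) q &
    last (f u) q = f (last u p) /\ size q + collapses u p <= size p.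
Proof.
elim: p u => [|w p IH] u /=; first by exists [::].
case/andP=> euw wp; have [q wq [lastq sizeq]] := IH w wp.
rewrite /collapses /= -/(collapses w p).
have [fuw | fuw] := eqVneq (f u) (f w).
  exists q; rewrite fuw //; split=> //.
  by rewrite addn1 ltnS (leq_trans _ sizeq) ?leq_addr.
have [efuw | fuw'] := f_edge euw; last by rewrite fuw' eqxx in fuw.
by exists (f w :: q); rewrite /= ?efuw.
Qed.

Hypothesis f_exit : forall u w, e u w -> u \in V -> w \notin V -> f u = f w.

Lemma exit_collapses u p :
  path e u p -> u \in V -> ~~ all (mem V) p -> collapses u p.
Proof.
elim: p u => [|w p IH] u //= /andP[euw wp] uV.
rewrite negb_and /collapses /= -/(collapses w p).
case: (boolP (w \in V)) => [wV /= | wV _]; first by move/(IH w wp wV)->; rewrite orbT.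
by rewrite (f_exit euw uV wV) eqxx.
Qed.

Hypothesis f_fix : {in V, forall x, f x = x}.

(* A shortest walk leaving V would have a strictly shorter image walk with
   the same endpoints. *)
Lemma collapsing_retraction_convex : convex_set e V.
Proof.
move=> u v p uV vV [up lastp shortest]; apply/negPn/negP => leavesV.
have [q uq [lastq sizeq]] := image_walk up.
rewrite f_fix // lastp f_fix // in uq lastq.
have := shortest q uq lastq.
by rewrite exit_collapses // addn1 in sizeq; rewrite leqNgt sizeq.
Qed.

End CollapsingRetraction.

Section SubcubeRetraction.
Variables (d : nat) (I : {set 'I_d}) (a : bstr d).

Definition reset (x : bstr d) : bstr d :=
  [ffun j => if j \in I then a j else x j].

Definition ccc_reset (w : ccc_vertex d) : ccc_vertex d := (w.1, reset w.2).

Lemma reset_flip_in (x : bstr d) l : l \in I -> reset (flip x l) = reset x.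
Proof.
move=> lI; apply/ffunP=> j; rewrite !ffunE.
by case: ifP => // jI; case: eqP => // jl; rewrite jl lI in jI.
Qed.

Lemma reset_flip_notin (x : bstr d) l :
  l \notin I -> reset (flip x l) = flip (reset x) l.
Proof.
move=> lI; apply/ffunP=> j; rewrite !ffunE.
by case: eqP => [-> | _]; rewrite ?(negbTE lI) ?ffunE ?eqxx //; case: ifP.
Qed.

Lemma ccc_reset_edge u w : ccc_adj u w ->
  ccc_reset u = ccc_reset w \/
  ccc_adj (ccc_reset u) (ccc_reset w) /\ {in I, u.2 =1 w.2}.
Proof.
case: u w => [l x] [l' x'] /orP[/andP[/eqP <- cyc] | /andP[/eqP <- /eqP ->]].
  by right; rewrite /ccc_adj /= eqxx cyc.
case: (boolP (l \in I)) => lI; first by left; rewrite /ccc_reset reset_flip_in.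
right; split; first by rewrite /ccc_adj /= reset_flip_notin // !eqxx orbT.
by move=> j jI /=; rewrite ffunE; case: eqP => // jl; rewrite -jl jI in lI.
Qed.

Lemma ccc_reset_fix : {in ccc_over (subcube I a), forall w, ccc_reset w = w}.
Proof.
case=> l x; rewrite !inE => /forall_inP onI; congr pair.
by apply/ffunP=> j; rewrite ffunE; case: ifP => // /onI /eqP.
Qed.

End SubcubeRetraction.

Theorem lemma4p1 (d d' : nat) (hd : 3 <= d) (hd' : d' < d)
    (I : {set 'I_d}) (hI : #|I| = d - d') (a : bstr d) :
  convex_set (@ccc_adj d) (ccc_over (subcube I a)).
Proof.
apply: (@collapsing_retraction_convex _ _ _ (ccc_reset I a)).
- by move=> u w /(ccc_reset_edge I a) [-> | [? _]]; [right | left].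
- move=> u w /(ccc_reset_edge I a) [// | [_ agree]] uV.
  case/negP; move: uV; rewrite !inE => /forall_inP onI.
  by apply/forall_inP=> i iI; rewrite -agree // onI.
- exact: ccc_reset_fix.
Qed.
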